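(* Let $\sigma$ be a proper schedule and let $\sigma'$ be the intermediate schedule obtained from $\sigma$ by an admissible swap at step $j^*\in J$ between machines $M_h$ and $M_i$. Writing $C_j=C_j(\sigma)$ and $C'_j=C_j(\sigma')$: (1) $C'_j=C_j$ for all $j\notin J_H\cup J_I$; (2) $C'_j\le C_j$ for all $j\in J_H$; (3) $C'_j\ge C_j$ for all $j\in J_I$.
   Context: Jobs $J=\{1,\dots,n\}$, job $j$ with positive integer processing time $p_j$, are scheduled non-preemptively on $m$ identical machines $M_1,\dots,M_m$; $p_{\max}=\max_j p_j$, $P(X)=\sum_{j\in X}p_j$. A proper schedule $\sigma$ is a partition $J=J_1(\sigma)\cup\dots\cup J_m(\sigma)$, the jobs of $J_i(\sigma)$ processed on $M_i$ consecutively from time $0$ without idle time in increasing index order; $C_j(\sigma)$ is the completion time of $j$. $J_j=\{1,\dots,j\}$, $J_{i,j}(\sigma)=J_i(\sigma)\cap J_j$, $\Delta_{h,i,j}(\sigma)=P(J_{h,j}(\sigma))-P(J_{i,j}(\sigma))$. The swap: admissible for proper $\sigma$ at step $j^*$ with machines $M_h,M_i$ if $j^*\in J_h(\sigma)$, $|J_i(\sigma)\setminus J_{i,j^*}(\sigma)|\ge 2p_{\max}$, and $\Delta_{h,i,j^*}(\sigma)\ge 4p_{\max}^2$. Let $J_I$ be the first (smallest-index) $2p_{\max}$ jobs of $J_i(\sigma)\setminus J_{i,j^*}(\sigma)$ and $J_H$ the last (largest-index) $2p_{\max}$ jobs of $J_{h,j^*}(\sigma)$; choose non-empty $J_{H'}\subseteq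 J_H$, $J_{I'}\subseteq J_I$ with $P(J_{H'})=P(J_{I'})$. The intermediate schedule $\sigma'$ is obtained by modifying only $M_h$ and $M_i$: on $M_h$ the time interval occupied by $J_H$ in $\sigma$ is filled by the jobs of $J_H\setminus J_{H'}$ (in their order in $\sigma$) followed by those of $J_{I'}$ (in their order in $\sigma$); on $M_i$ the interval occupied by $J_I$ is filled by $J_{H'}$ followed by $J_I\setminus J_{I'}$ (each in their order in $\sigma$); all other jobs keep their positions. *)

From mathcomp Require Import all_boot all_order all_algebra.
Set Implicit Arguments. Unset Strict Implicit. Unset Printing Implicit Defensive.

(* Jobs are the natural numbers 1..n; processing times p : nat -> nat
   (only the values on 1..n matter). A proper schedule
   is an assignment a : nat -> 'I_m of jobs to machines (J_i(sigma) is the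
   set of jobs j in 1..n with a j = i); each machine processes its jobs in
   increasing index order from time 0 without idle time. *)

Definition jobs (n : nat) : seq nat := iota 1 n.

Definition Pset (p : nat -> nat) (s : seq nat) : nat := \sum_(k <- s) p k.

Definition pmax (p : nat -> nat) (n : nat) : nat := \max_(j <- jobs n) p j.

Definition machine_jobs m n (a : nat -> 'I_m) (i : 'I_m) : seq nat :=
  [seq j <- jobs n | a j == i].

Definition machine_jobs_upto m n (a : nat -> 'I_m) (i : 'I_m) (j : nat) : seq nat :=
  [seq k <- machine_jobs n a i | k <= j].

Definition machine_jobs_after m n (a : nat -> 'I_m) (i : 'I_m) (j : nat) : seq nat :=
  [seq k <- machine_jobs n a i | j < k].

Definition C_proper m (p : nat -> nat) n (a : nat -> 'I_m) (j : nat) : nat :=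
  Pset p (machine_jobs_upto n a (a j) j).

Definition Delta m (p : nat -> nat) n (a : nat -> 'I_m) (h i : 'I_m) (j : nat) : int :=
  ((Pset p (machine_jobs_upto n a h j))%:Z - (Pset p (machine_jobs_upto n a i j))%:Z)%R.

Definition admissible m (p : nat -> nat) n (a : nat -> 'I_m) (jstar : nat) (h i : 'I_m) : Prop :=
  [/\ 1 <= jstar <= n, a jstar = h,
      2 * pmax p n <= size (machine_jobs_after n a i jstar)
    & ((4 * pmax p n ^ 2)%:Z <= Delta p n a h i jstar)%R].

Definition J_I m (p : nat -> nat) n (a : nat -> 'I_m) (jstar : nat) (i : 'I_m) : seq nat :=
  take (2 * pmax p n) (machine_jobs_after n a i jstar).

Definition J_H m (p : nat -> nat) n (a : nat -> 'I_m) (jstar : nat) (h : 'I_m) : seq nat :=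
  let L := machine_jobs_upto n a h jstar in drop (size L - 2 * pmax p n) L.

(* J_{H'} = J_H ∩ HH and J_{I'} = J_I ∩ II are the chosen subsets:
   nonempty with equal total processing time. *)
Definition swap_choice m (p : nat -> nat) n (a : nat -> 'I_m) (jstar : nat) (h i : 'I_m)
  (HH II : pred nat) : Prop :=
  [/\ has HH (J_H p n a jstar h), has II (J_I p n a jstar i)
    & Pset p (filter HH (J_H p n a jstar h)) = Pset p (filter II (J_I p n a jstar i))].

(* The intermediate schedule sigma': the sequence of jobs processed
   (consecutively from time 0, no idle time) on each machine k. *)
Definition inter_seq m (p : nat -> nat) n (a : nat -> 'I_m) (jstar : nat) (h i : 'I_m)
  (HH II : pred nat) (k : 'I_m) : seq nat :=
  let JH := J_H p n a jstar h in
  let JI := J_I p n a jstar i in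
  if k == h then
    let L := machine_jobs_upto n a h jstar in
    take (size L - size JH) L ++ filter (predC HH) JH ++ filter II JI
      ++ machine_jobs_after n a h jstar
  else if k == i then
    machine_jobs_upto n a i jstar ++ filter HH JH ++ filter (predC II) JI
      ++ drop (size JI) (machine_jobs_after n a i jstar)
  else machine_jobs n a k.

Definition inter_machine m (p : nat -> nat) n (a : nat -> 'I_m) (jstar : nat) (h i : 'I_m)
  (HH II : pred nat) (j : nat) : 'I_m :=
  if (j \in J_H p n a jstar h) && HH j then i
  else if (j \in J_I p n a jstar i) && II j then h
  else a j.

Definition seq_completion (p : nat -> nat) (s : seq nat) (j : nat) : nat :=
  Pset p (take (index j s).+1 s).

Definition C_inter m (p : nat -> nat) n (a : nat -> 'I_m) (jstar : nat) (h i : 'I_m)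
  (HH II : pred nat) (j : nat) : nat :=
  seq_completion p (inter_seq p n a jstar h i HH II (inter_machine p n a jstar h i HH II j)) j.

From mathcomp Require Import all_boot all_order all_algebra.
From mathcomp Require Import zify.

(* On M_h the swap replaces J_H by (J_H \ J_H') ++ J_I', and on M_i it replaces
   J_I by J_H' ++ (J_I \ J_I'); since P(J_H') = P(J_I') both blocks keep their
   total length, so no other job moves.  Each block weighs at most
   2 p_max * p_max, while Delta >= 4 p_max^2; hence the load of M_i up to j*
   plus either block is at most the load of M_h before J_H.  A job crossing
   from M_h to M_i therefore finishes earlier, and one crossing from M_i to M_h
   later.  A job of J_H staying on M_h only loses predecessors, and a job of
   J_I staying on M_i trades its predecessors in J_I' for J_H' of equal weight. *)

Section Weights.
Variable p : nat -> nat.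

Lemma Pset_cat s1 s2 : Pset p (s1 ++ s2) = Pset p s1 + Pset p s2.
Proof. exact: big_cat. Qed.

Lemma Pset_filter_predC (P : pred nat) s :
  Pset p (filter P s) + Pset p (filter (predC P) s) = Pset p s.
Proof. by rewrite /Pset !big_filter [RHS](bigID P). Qed.

Lemma Pset_filter_le (P : pred nat) s : Pset p (filter P s) <= Pset p s.
Proof. by rewrite -(Pset_filter_predC P s) leq_addr. Qed.

Lemma Pset_take_le k s : Pset p (take k s) <= Pset p s.
Proof. by rewrite -{2}(cat_take_drop k s) Pset_cat leq_addr. Qed.

Lemma Pset_le_size_mul s M : {in s, forall x, p x <= M} -> Pset p s <= size s * M.
Proof.
elim: s => [|x s IH] le_pM; first by rewrite /Pset big_nil.
rewrite /Pset big_cons mulSn leq_add ?le_pM ?mem_head //.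
by apply: IH => y sy; rewrite le_pM // in_cons sy orbT.
Qed.

Lemma seq_completion_cat_l s1 s2 j : j \in s1 ->
  seq_completion p (s1 ++ s2) j = seq_completion p s1 j.
Proof. by move=> s1j; rewrite /seq_completion index_cat s1j takel_cat // index_mem. Qed.

Lemma seq_completion_cat_r s1 s2 j : j \notin s1 ->
  seq_completion p (s1 ++ s2) j = Pset p s1 + seq_completion p s2 j.
Proof.
move=> s1j; rewrite /seq_completion index_cat (negbTE s1j) -addnS take_cat.
by rewrite ltnNge leq_addr /= addKn Pset_cat.
Qed.

Lemma seq_completion_cat_swap s1 s1' s2 j : j \notin s1 -> j \notin s1' ->
  Pset p s1 = Pset p s1' -> seq_completion p (s1 ++ s2) j = seq_completion p (s1' ++ s2) j.
Proof. by move=> s1j s1'j eq_P; rewrite !seq_completion_cat_r // eq_P. Qed.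

Lemma seq_completion_le_Pset s j : seq_completion p s j <= Pset p s.
Proof. exact: Pset_take_le. Qed.

Lemma take_index_filter (P : pred nat) s j : P j ->
  take (index j (filter P s)).+1 (filter P s) = filter P (take (index j s).+1 s).
Proof.
move=> Pj; elim: s => //= x s IH; rewrite /index /=.
case: (eqVneq x j) => [->|neq_xj]; first by rewrite Pj /= eqxx !take0.
by case: (P x) => //=; rewrite (negbTE neq_xj) /= -IH.
Qed.

Lemma seq_completion_filter_le (P : pred nat) s j : P j ->
  seq_completion p (filter P s) j <= seq_completion p s j.
Proof. by move=> Pj; rewrite /seq_completion take_index_filter // Pset_filter_le. Qed.

Lemma seq_completion_le_filter_split (P : pred nat) s j : ~~ P j ->
  seq_completion p s j <= Pset p (filter P s) + seq_completion p (filter (predC P) s) j.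
Proof.
move=> nPj; rewrite {2}/seq_completion take_index_filter //.
set k := (index j s).+1; rewrite /seq_completion -/k -(Pset_filter_predC P (take k s)) leq_add2r.
by rewrite -{2}(cat_take_drop k s) filter_cat Pset_cat leq_addr.
Qed.

End Weights.

Lemma take_index_sorted s j : sorted ltn s -> j \in s ->
  take (index j s).+1 s = [seq k <- s | k <= j].
Proof.
elim: s => //= x s IH; rewrite (path_sortedE ltn_trans) => /andP[/allP gt_x sorted_s].
rewrite in_cons /index /=; case: (eqVneq x j) => [<- _|neq_xj /= sj].
  rewrite leqnn take0 -(filter_pred0 s); congr (_ :: _).
  by apply: eq_in_filter => k /gt_x; rewrite ltnNge => /negbTE.
by rewrite (ltnW (gt_x j sj)) -IH.
Qed.

Lemma filter_leq_cat_gtn s j : sorted ltn s ->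
  [seq k <- s | k <= j] ++ [seq k <- s | j < k] = s.
Proof.
elim: s => //= x s IH; rewrite (path_sortedE ltn_trans) => /andP[/allP gt_x sorted_s].
case: (leqP x j) => [le_xj|lt_jx] /=; first by rewrite IH.
rewrite (@eq_in_filter _ _ pred0 s) ?filter_pred0 /=; last first.
  by move=> k /gt_x /(ltn_trans lt_jx); rewrite ltnNge => /negbTE.
by congr (_ :: _); apply/all_filterP/allP => k /gt_x; apply: ltn_trans.
Qed.

Section ProperSchedule.
Variables (m n : nat) (p : nat -> nat) (a : nat -> 'I_m).

Lemma mem_jobs j : (j \in jobs n) = (1 <= j <= n).
Proof. by rewrite mem_iota add1n ltnS. Qed.

Lemma sorted_machine_jobs k : sorted ltn (machine_jobs n a k).
Proof. exact/sorted_filter/iota_ltn_sorted/ltn_trans. Qed.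

Lemma uniq_machine_jobs_upto k j : uniq (machine_jobs_upto n a k j).
Proof. by rewrite !filter_uniq // iota_uniq. Qed.

Lemma machine_jobs_split k j :
  machine_jobs n a k = machine_jobs_upto n a k j ++ machine_jobs_after n a k j.
Proof. by rewrite filter_leq_cat_gtn // sorted_machine_jobs. Qed.

Lemma C_proper_seq_completion j : j \in jobs n ->
  C_proper p n a j = seq_completion p (machine_jobs n a (a j)) j.
Proof.
move=> jn; rewrite /seq_completion take_index_sorted ?sorted_machine_jobs //.
by rewrite mem_filter eqxx.
Qed.

Lemma p_le_pmax x : x \in jobs n -> p x <= pmax p n.
Proof. by move=> xn; apply: leq_bigmax_seq. Qed.

End ProperSchedule.

Section AdmissibleSwap.
Variables (m n : nat) (p : nat -> nat) (a : nat -> 'I_m) (jstar : nat) (h i : 'I_m).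
Variables (HH II : pred nat).
Hypotheses (adm : admissible p n a jstar h i) (choice : swap_choice p n a jstar h i HH II).

Local Notation pm := (pmax p n).
Local Notation Lh := (machine_jobs_upto n a h jstar).
Local Notation Li := (machine_jobs_upto n a i jstar).
Local Notation Ah := (machine_jobs_after n a h jstar).
Local Notation Ai := (machine_jobs_after n a i jstar).
Local Notation T := (take (size Lh - 2 * pm) Lh).
Local Notation D := (drop (2 * pm) Ai).
Local Notation JH := (J_H p n a jstar h).
Local Notation JI := (J_I p n a jstar i).
Local Notation sigma' := (inter_seq p n a jstar h i HH II).
Local Notation machine' := (inter_machine p n a jstar h i HH II).

Lemma machine_jobs_upto_cat_J_H : Lh = T ++ JH.
Proof. by rewrite cat_take_drop. Qed.

Lemma machine_jobs_after_cat_J_I : Ai = JI ++ D.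
Proof. by rewrite cat_take_drop. Qed.

Lemma mem_J_H x : x \in JH -> [&& x <= jstar, a x == h & x \in jobs n].
Proof. by move/mem_drop; rewrite !mem_filter. Qed.

Lemma mem_J_I x : x \in JI -> [&& jstar < x, a x == i & x \in jobs n].
Proof. by move/mem_take; rewrite !mem_filter. Qed.

Lemma size_J_H : size JH <= 2 * pm.
Proof. by rewrite size_drop; lia. Qed.

Lemma size_J_I : size JI = 2 * pm.
Proof. by case: adm => _ _ le_size _; rewrite size_takel. Qed.

Lemma Pset_J_H_le : Pset p JH <= 2 * pm * pm.
Proof.
apply: leq_trans (leq_mul size_J_H (leqnn pm)); apply: Pset_le_size_mul => x.
by case/mem_J_H/and3P => _ _; apply: p_le_pmax.
Qed.

Lemma Pset_J_I_le : Pset p JI <= 2 * pm * pm.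
Proof.
rewrite -size_J_I; apply: Pset_le_size_mul => x.
by case/mem_J_I/and3P => _ _; apply: p_le_pmax.
Qed.

Lemma load_gap : Pset p Li + 2 * pm * pm <= Pset p T.
Proof.
have := congr1 (Pset p) machine_jobs_upto_cat_J_H; rewrite Pset_cat.
by case: adm => _ _ _; rewrite /Delta; have := Pset_J_H_le; lia.
Qed.

Lemma pmax_gt0 : 0 < pm.
Proof.
case: choice => /hasP[x JHx _] _ _; have : 0 < size JH by case: (JH) JHx.
by have := size_J_H; lia.
Qed.

Lemma swap_machines_neq : h != i.
Proof.
apply/eqP => eq_hi; have := load_gap; rewrite -eq_hi.
by have := Pset_take_le p (size Lh - 2 * pm) Lh; have := pmax_gt0; nia.
Qed.

Lemma machine_jobs_h : machine_jobs n a h = T ++ JH ++ Ah.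
Proof. by rewrite (machine_jobs_split _ _ _ _ jstar) catA -machine_jobs_upto_cat_J_H. Qed.

Lemma machine_jobs_i : machine_jobs n a i = Li ++ JI ++ D.
Proof. by rewrite (machine_jobs_split _ _ _ _ jstar) -machine_jobs_after_cat_J_I. Qed.

Lemma inter_seq_h : sigma' h = T ++ filter (predC HH) JH ++ filter II JI ++ Ah.
Proof. by rewrite /inter_seq eqxx; congr (take _ _ ++ _); rewrite size_drop; lia. Qed.

Lemma inter_seq_i : sigma' i = Li ++ filter HH JH ++ filter (predC II) JI ++ D.
Proof. by rewrite /inter_seq eq_sym (negbTE swap_machines_neq) eqxx size_J_I. Qed.

Lemma inter_seq_other k : k != h -> k != i -> sigma' k = machine_jobs n a k.
Proof. by rewrite /inter_seq => /negbTE -> /negbTE ->. Qed.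

Lemma inter_machine_unmoved j : j \notin JH -> j \notin JI -> machine' j = a j.
Proof. by rewrite /inter_machine => /negbTE -> /negbTE ->. Qed.

Lemma J_I_notin_J_H {j} : j \in JI -> j \notin JH.
Proof.
move=> /mem_J_I/and3P[_ /eqP aji _]; apply/negP => /mem_J_H/and3P[_ /eqP ajh _].
by move: swap_machines_neq; rewrite -ajh -aji eqxx.
Qed.

Lemma uniq_T_J_H : uniq (T ++ JH).
Proof. by rewrite -machine_jobs_upto_cat_J_H uniq_machine_jobs_upto. Qed.

Lemma inter_machine_J_H j : j \in JH -> machine' j = if HH j then i else h.
Proof.
move=> JHj; have /mem_J_H/and3P[_ /eqP ajh _] := JHj.
have JInj : j \notin JI by apply: contraL JHj; apply: J_I_notin_J_H.
by rewrite /inter_machine JHj (negbTE JInj) ajh; case: (HH j).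
Qed.

Lemma inter_machine_J_I j : j \in JI -> machine' j = if II j then h else i.
Proof.
move=> JIj; have /mem_J_I/and3P[_ /eqP aji _] := JIj.
by rewrite /inter_machine (negbTE (J_I_notin_J_H JIj)) JIj aji; case: (II j).
Qed.

Lemma C_inter_unmoved j : j \in jobs n -> j \notin JH -> j \notin JI ->
  C_inter p n a jstar h i HH II j = C_proper p n a j.
Proof.
move=> jn JHnj JInj; rewrite /C_inter inter_machine_unmoved // C_proper_seq_completion //.
case: choice => _ _ balanced.
case: (eqVneq (a j) h) => [->|ajh]; last case: (eqVneq (a j) i) => [->|aji].
- rewrite inter_seq_h machine_jobs_h.
  case Tj: (j \in T); first by rewrite !seq_completion_cat_l.
  rewrite !catA; apply: seq_completion_cat_swap;
    rewrite ?mem_cat ?mem_filter ?Tj ?(negbTE JHnj) ?(negbTE JInj) ?andbF //.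
  by rewrite !Pset_cat -(Pset_filter_predC p HH JH) balanced; lia.
- rewrite inter_seq_i machine_jobs_i.
  case Lj: (j \in Li); first by rewrite !seq_completion_cat_l.
  rewrite !catA; apply: seq_completion_cat_swap;
    rewrite ?mem_cat ?Lj ?mem_filter ?(negbTE JHnj) ?(negbTE JInj) ?andbF //.
  by rewrite !Pset_cat -(Pset_filter_predC p II JI) -balanced; lia.
- by rewrite inter_seq_other.
Qed.

Lemma C_inter_J_H_le j : j \in JH ->
  C_inter p n a jstar h i HH II j <= C_proper p n a j.
Proof.
move=> JHj; have /mem_J_H/and3P[_ /eqP ajh jn] := JHj.
have Tnj : j \notin T by have := uniq_T_J_H; rewrite cat_uniq => /and3P[_ /hasPn/(_ j JHj)].
rewrite /C_inter inter_machine_J_H // C_proper_seq_completion // ajh machine_jobs_h.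
rewrite seq_completion_cat_r // seq_completion_cat_l //; case: ifP => HHj.
- have Linj : j \notin Li by rewrite !mem_filter ajh (negbTE swap_machines_neq) andbF.
  rewrite inter_seq_i seq_completion_cat_r // seq_completion_cat_l ?mem_filter ?HHj //.
  have := seq_completion_le_Pset p (filter HH JH) j; have := Pset_filter_le p HH JH.
  by have := load_gap; have := Pset_J_H_le; lia.
- rewrite inter_seq_h seq_completion_cat_r // seq_completion_cat_l ?mem_filter /= ?HHj //.
  by rewrite leq_add2l seq_completion_filter_le //= HHj.
Qed.

Lemma C_proper_J_I_le j : j \in JI ->
  C_proper p n a j <= C_inter p n a jstar h i HH II j.
Proof.
move=> JIj; have /mem_J_I/and3P[lt_j /eqP aji jn] := JIj.
have Linj : j \notin Li by rewrite mem_filter leqNgt lt_j.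
have Tnj : j \notin T by apply: contraL lt_j => /mem_take; rewrite mem_filter -leqNgt => /andP[].
rewrite C_proper_seq_completion // aji machine_jobs_i seq_completion_cat_r //.
rewrite seq_completion_cat_l // /C_inter inter_machine_J_I //; case: ifP => IIj.
- rewrite inter_seq_h seq_completion_cat_r //.
  by have := seq_completion_le_Pset p JI j; have := load_gap; have := Pset_J_I_le; lia.
- rewrite inter_seq_i seq_completion_cat_r // seq_completion_cat_r; last first.
    by rewrite mem_filter (negbTE (J_I_notin_J_H JIj)) andbF.
  rewrite seq_completion_cat_l ?mem_filter /= ?IIj // leq_add2l.
  by case: choice => _ _ ->; apply: seq_completion_le_filter_split; rewrite IIj.
Qed.

End AdmissibleSwap.

Theorem lemma4 (m n : nat) (p : nat -> nat) (a : nat -> 'I_m)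
  (jstar : nat) (h i : 'I_m) (HH II : pred nat) :
  (forall j, 1 <= j <= n -> 0 < p j) ->
  admissible p n a jstar h i ->
  swap_choice p n a jstar h i HH II ->
  [/\ (forall j, 1 <= j <= n -> j \notin J_H p n a jstar h -> j \notin J_I p n a jstar i ->
         C_inter p n a jstar h i HH II j = C_proper p n a j),
      (forall j, j \in J_H p n a jstar h ->
         C_inter p n a jstar h i HH II j <= C_proper p n a j)
    & (forall j, j \in J_I p n a jstar i ->
         C_proper p n a j <= C_inter p n a jstar h i HH II j)].
Proof.
move=> _ adm choice; split=> j.
- by rewrite -mem_jobs; apply: C_inter_unmoved.
- exact: C_inter_J_H_le.
- exact: C_proper_J_I_le.
Qed.
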